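(* For every $\delta>0$ and $n\in\mathbb{N}$ there exists $N\in\mathbb{N}$ such that the following holds for every $N$-partitioned hypergraph $H$ and every choice of subsets $C_{ijk}\subseteq V_{ik}$, for $i<j<k$, $i,j,k\in[N]$, with $|C_{ijk}|\ge\delta|V_{ik}|$: there exist an induced $n$-partitioned subhypergraph $H'$ of $H$ with index set $I\subseteq[N]$ and vertices $\gamma_{ik}\in V_{ik}$, $i<k$, $i,k\in I$, such that $\gamma_{ik}\in C_{ijk}$ for all $j\in I$ with $i<j<k$.
   Context: An $n$-partitioned hypergraph $H$ is a finite $3$-uniform hypergraph whose vertex set is partitioned into nonempty sets $V_{ij}$, $1\le i<j\le n$, such that every edge has, for some $1\le i<j<k\le n$, exactly one vertex in each of $V_{ij}$, $V_{ik}$, $V_{jk}$. For $I\subseteq[n]$, the induced subhypergraph with index set $I$ is the $|I|$-partitioned hypergraph with parts $V_{ij}$, $i<j$, $i,j\in I$ (indexed by elements of $I$) and all edges of $H$ contained in the union of these parts. *)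

From HB Require Import structures.
From mathcomp Require Import all_boot all_order all_algebra.
From mathcomp Require Import reals.
Set Implicit Arguments. Unset Strict Implicit. Unset Printing Implicit Defensive.
Import Order.TTheory GRing.Theory Num.Theory.

(* An N-partitioned 3-uniform hypergraph on a finite vertex type V is given by
   a part map [part : V -> 'I_N * 'I_N] (v lies in V_{ij} iff part v = (i,j))
   and an edge set [E : {set {set V}}]. *)

Definition Vpart (V : finType) (N : nat) (part : V -> 'I_N * 'I_N)
  (i j : 'I_N) : {set V} := [set v | part v == (i, j)].

Definition is_partitioned_hypergraph (V : finType) (N : nat)
  (part : V -> 'I_N * 'I_N) (E : {set {set V}}) : Prop :=
  (forall v : V, ((part v).1 < (part v).2)%N) /\
  (forall i j : 'I_N, (i < j)%N -> exists v : V, part v = (i, j)) /\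
  (forall e : {set V}, e \in E ->
     exists (i j k : 'I_N), [/\ (i < j)%N, (j < k)%N &
       exists a b c : V, [/\ part a = (i, j), part b = (i, k),
                            part c = (j, k) & e = [set a; b; c]]]).

Definition induced_vertices (V : finType) (N : nat)
  (part : V -> 'I_N * 'I_N) (I : {set 'I_N}) : {set V} :=
  [set v | ((part v).1 \in I) && ((part v).2 \in I)].

From HB Require Import structures.
From mathcomp Require Import all_boot all_order all_algebra.
From mathcomp Require Import reals.
From mathcomp Require Import zify.
Import Order.TTheory GRing.Theory Num.Theory.
Set Implicit Arguments. Unset Strict Implicit. Unset Printing Implicit Defensive.

(* Choose L with n <= delta L.  For positions p < q < n, call an n-element index
   sequence S good for (p, q) if some vertex of V_{S_p S_q} lies in C_{S_p j S_q}
   for every entry j of S between positions p and q.  Every (L + n)-element index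
   sequence contains an n-element one that is good for (p, q): put i and k at
   positions p and q with L indices between them; averaging gives a vertex of V_ik
   lying in at least delta L >= n of the sets C_ijk, and q - p - 1 of those j fill
   the gap.  Hence, by Ramsey's theorem applied once for each of the n^2 pairs
   (p, q), there is an n-element index set that is good for all pairs at once, and
   its witnesses are the gamma_ik. *)

Definition monochromatic (T : eqType) (s : nat) (f : pred (seq T)) (c : bool)
    (Y : seq T) :=
  forall S, subseq S Y -> size S = s -> f S = c.

Lemma monochromatic_subseq (T : eqType) s f c (Y Z : seq T) :
  subseq Z Y -> monochromatic s f c Y -> monochromatic s f c Z.
Proof. by move=> sZY monoY S sSZ; apply: monoY; exact: subseq_trans sSZ sZY. Qed.

Lemma monochromatic_nil (T : eqType) s f c : monochromatic s.+1 f c ([::] : seq T).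
Proof. by move=> S; rewrite subseq0 => /eqP ->. Qed.

Lemma monochromatic_cons (T : eqType) s f c (x : T) Z :
  monochromatic s (fun U => f (x :: U)) c Z -> monochromatic s.+1 f c Z ->
  monochromatic s.+1 f c (x :: Z).
Proof.
move=> monox monoZ [|y S] //= + /succn_inj szS.
by case: eqP => [-> | _] sS; [exact: monox | apply: monoZ; rewrite //= szS].
Qed.

Definition ramsey_bound (s a b R : nat) :=
  forall (T : eqType) (X : seq T) (f : pred (seq T)), R <= size X ->
  exists2 Y, subseq Y X &
    (size Y = a /\ monochromatic s f true Y) \/
    (size Y = b /\ monochromatic s f false Y).

Lemma ramsey_bound0 a b : ramsey_bound 0 a b (maxn a b).
Proof.
move=> T X f; rewrite geq_max => /andP [leaX lebX].
have mono0 Y : monochromatic 0 f (f [::]) Y by move=> S _ /size0nil ->.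
case fnil: (f [::]); [exists (take a X) | exists (take b X)];
  rewrite ?take_subseq // -fnil; [left | right]; by rewrite size_takel.
Qed.

Lemma ramsey_bound0l s b : ramsey_bound s.+1 0 b 0.
Proof.
by move=> T X f _; exists [::]; rewrite ?sub0seq //; left; split; last exact: monochromatic_nil.
Qed.

Lemma ramsey_bound0r s a : ramsey_bound s.+1 a 0 0.
Proof.
by move=> T X f _; exists [::]; rewrite ?sub0seq //; right; split; last exact: monochromatic_nil.
Qed.

(* Colour the tail by U |-> f (x :: U) and take a large monochromatic Y in it; a
   monochromatic subsequence of Y of that same colour extends by x. *)
Lemma ramsey_bound_step s a b R1 R2 R :
  ramsey_bound s.+1 a b.+1 R1 -> ramsey_bound s.+1 a.+1 b R2 ->
  ramsey_bound s R1 R2 R -> ramsey_bound s.+1 a.+1 b.+1 R.+1.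
Proof.
move=> hR1 hR2 hR T [//|x X] f /= /(hR T X (fun U => f (x :: U))).
have sub_cons Z Y : subseq Z Y -> subseq Y X -> subseq Z (x :: X).
  by move=> sZY sYX; apply: subseq_trans (subseq_trans sZY sYX) (subseq_cons X x).
have cons_sub Z Y : subseq Z Y -> subseq Y X -> subseq (x :: Z) (x :: X).
  by move=> sZY sYX; rewrite /= eqxx (subseq_trans sZY sYX).
case=> Y sYX [[szY monoY] | [szY monoY]].
- have [Z sZY [[szZ monoZ] | [szZ monoZ]]] := hR1 T Y f (eq_leq (esym szY)).
  + exists (x :: Z); first exact: cons_sub sZY sYX.
    left; split; first by rewrite /= szZ.
    by apply: monochromatic_cons monoZ; exact: monochromatic_subseq monoY.
  + by exists Z; [exact: sub_cons sZY sYX | right].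
- have [Z sZY [[szZ monoZ] | [szZ monoZ]]] := hR2 T Y f (eq_leq (esym szY)).
  + by exists Z; [exact: sub_cons sZY sYX | left].
  + exists (x :: Z); first exact: cons_sub sZY sYX.
    right; split; first by rewrite /= szZ.
    by apply: monochromatic_cons monoZ; exact: monochromatic_subseq monoY.
Qed.

Lemma ramsey s a b : exists R, ramsey_bound s a b R.
Proof.
elim: s a b => [|s IHs] a b; first by exists (maxn a b); exact: ramsey_bound0.
elim: a b => [|a IHa] b; first by exists 0; exact: ramsey_bound0l.
elim: b => [|b [R2 hR2]]; first by exists 0; exact: ramsey_bound0r.
have [R1 hR1] := IHa b.+1; have [R hR] := IHs R1 R2.
by exists R.+1; exact: ramsey_bound_step hR1 hR2 hR.
Qed.

(* A colouring for which every b-subsequence contains an s-subsequence of colour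
   true has no large monochromatic subsequence of colour false. *)
Lemma ramsey_forcing (I : eqType) (r : seq I) (s a b : nat) : exists R,
  forall (T : eqType) (X : seq T) (F : I -> pred (seq T)),
    (forall i Y, i \in r -> subseq Y X -> size Y = b ->
       exists2 S, subseq S Y & size S = s /\ F i S) ->
    R <= size X ->
    exists2 Y, subseq Y X &
      size Y = a /\ forall i, i \in r -> monochromatic s (F i) true Y.
Proof.
elim: r => [|i r [Rr hRr]].
  by exists a => T X F _ leX; exists (take a X); rewrite ?take_subseq ?size_takel.
have [R hR] := ramsey s Rr b.
exists R => T X F forced leX.
have [Y sYX [[szY monoY] | [szY monoY]]] := hR T X (F i) leX; last first.
  have [S sSY [szS FS]] := forced i Y (mem_head i r) sYX szY.
  by rewrite monoY in FS.
have forcedY j W : j \in r -> subseq W Y -> size W = b ->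
    exists2 S, subseq S W & size S = s /\ F j S.
  by move=> jr sWY; apply: forced; [rewrite inE jr orbT | exact: subseq_trans sWY sYX].
have [Z sZY [szZ monoZ]] := hRr T Y F forcedY (eq_leq (esym szY)).
exists Z; first exact: subseq_trans sZY sYX.
split=> // j; rewrite inE => /predU1P [-> | /monoZ //].
exact: monochromatic_subseq monoY.
Qed.

Definition inner_segment (T : Type) (p q : nat) (s : seq T) := drop p.+1 (take q s).

Lemma inner_segment_cat (T : Type) (x0 : T) low i J k high :
  let S := low ++ i :: J ++ k :: high in
  [/\ nth x0 S (size low) = i, nth x0 S (size low + (size J).+1) = k &
      inner_segment (size low) (size low + (size J).+1) S = J].
Proof.
elim: low => [|x low IH] /=; last by case: IH.
by rewrite /inner_segment /= nth_cat ltnn subnn take_size_cat // drop0.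
Qed.

Lemma split_at_two (T : Type) (s : seq T) p L : p + L + 2 <= size s ->
  exists low i mid k high,
    [/\ s = low ++ i :: mid ++ k :: high, size low = p & size mid = L].
Proof.
move=> le_size; have := size_drop p s.
case def_rest: (drop p s) => [|i rest] /=; first by lia.
move=> sz_rest; have := size_drop L rest.
case def_high: (drop L rest) => [|k high] /=; first by lia.
move=> sz_high; exists (take p s), i, (take L rest), k, high; split.
- by rewrite -def_high cat_take_drop -def_rest cat_take_drop.
- by rewrite size_takel //; lia.
- by rewrite size_takel //; lia.
Qed.

Section SortedSegments.

Variables (T : eqType) (lt : rel T).
Hypothesis lt_trans : transitive lt.

Lemma sorted_cat_cons_between low i mid k high :
  sorted lt (low ++ i :: mid ++ k :: high) ->
  lt i k /\ {in mid, forall j, lt i j && lt j k}.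
Proof.
rewrite (sorted_pairwise lt_trans) pairwise_cat pairwise_cons pairwise_cat.
rewrite all_cat /= => /and4P [_ _ /and3P [lt_i_mid lt_ik _] /andP []].
rewrite allrel_consr => /andP [mid_lt_k _] _; split=> // j j_mid.
by rewrite (allP lt_i_mid) ?(allP mid_lt_k).
Qed.

(* S keeps the first p entries of Y, then i, J, the entry k closing an L-block
   after i, and as many later entries as needed. *)
Lemma sorted_subseq_segment (x0 : T) (P : T -> T -> seq T -> bool) (n L p q : nat)
    (Y : seq T) :
  sorted lt Y -> p < q < n -> size Y = n + L ->
  (forall i k mid, lt i k -> {in mid, forall j, lt i j && lt j k} -> size mid = L ->
     exists2 J, subseq J mid & size J = q - p.+1 /\ P i k J) ->
  exists2 S, subseq S Y &
    size S = n /\ P (nth x0 S p) (nth x0 S q) (inner_segment p q S).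
Proof.
move=> sortedY /andP [lt_pq lt_qn] szY segment.
have [|low [i [mid [k [high [defY szlow szmid]]]]]] := @split_at_two _ Y p L.
  by rewrite szY; lia.
have [|lt_ik mid_between] := @sorted_cat_cons_between low i mid k high.
  by rewrite -defY.
have [J sJ [szJ PJ]] := segment i k mid lt_ik mid_between szmid.
pose high' := take (n - q.+1) high.
have [nth_i nth_k segJ] := inner_segment_cat x0 low i J k high'.
have sz_high' : size high' = n - q.+1.
  by move/(congr1 size): defY; rewrite size_cat /= size_cat /= => ?; rewrite size_takel; lia.
exists (low ++ i :: J ++ k :: high').
  by rewrite defY cat_subseq //= eqxx cat_subseq //= eqxx take_subseq.
have -> : q = size low + (size J).+1 by lia.
rewrite -szlow nth_i nth_k segJ size_cat /= size_cat /= sz_high'; split=> //; lia.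
Qed.

Hypothesis lt_irr : irreflexive lt.

Lemma sorted_index_lt (s : seq T) :
  sorted lt s -> {in s &, forall x y, lt x y -> index x s < index y s}.
Proof.
move=> sorted_s x y xs ys lt_xy; rewrite ltnNge leq_eqVlt.
apply/negP => /orP [/eqP /(index_inj x ys xs) eq_yx | lt_idx].
  by move: lt_xy; rewrite eq_yx lt_irr.
by have := lt_trans lt_xy (sorted_ltn_index lt_trans sorted_s _ _ ys xs lt_idx); rewrite lt_irr.
Qed.

Lemma mem_inner_segment (s : seq T) i j k :
  sorted lt s -> i \in s -> j \in s -> k \in s -> lt i j -> lt j k ->
  j \in inner_segment (index i s) (index k s) s.
Proof.
move=> sorted_s i_s j_s k_s lt_ij lt_jk.
have idx_ij := sorted_index_lt sorted_s i_s j_s lt_ij.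
have idx_jk := sorted_index_lt sorted_s j_s k_s lt_jk.
have : j \in take (index k s) s by rewrite in_take.
rewrite -(cat_take_drop (index i s).+1 (take (index k s) s)) mem_cat.
by rewrite take_takel ?(ltn_trans idx_ij idx_jk) // in_take // ltnNge idx_ij.
Qed.

End SortedSegments.

Local Open Scope ring_scope.

Lemma exists_nat_mul_ge (R : archiRealFieldType) (delta x : R) :
  0 < delta -> exists L : nat, x <= delta * L%:R.
Proof.
move=> delta_gt0; exists (Num.truncn (`|x| / delta)).+1.
apply: le_trans (ler_norm x) _; rewrite -ler_pdivrMl //.
by rewrite mulrC; exact/ltW/truncnS_gt.
Qed.

(* Double counting of the incidences between the points of A and the sets of cs. *)
Lemma density_pigeonhole (R : realDomainType) (delta : R) (V : finType) (A : {set V})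
    (cs : seq {set V}) :
  A != set0 ->
  (forall c, c \in cs -> c \subset A /\ delta * #|A|%:R <= #|c|%:R) ->
  exists2 v, v \in A & delta * (size cs)%:R <= (count (fun c : {set V} => v \in c) cs)%:R.
Proof.
move=> /set0Pn [v0 v0A] dense.
have double_count : (\sum_(v in A) count (fun c : {set V} => v \in c) cs = \sum_(c <- cs) #|c|)%N.
  transitivity (\sum_(c <- cs) \sum_(v in A) (v \in c : nat))%N.
    by rewrite exchange_big /=; apply: eq_bigr => v _; rewrite -sum1_count big_mkcond.
  apply: eq_big_seq => c /dense [cA _].
  rewrite -sum1_card [RHS]big_mkcond [LHS]big_mkcond; apply: eq_bigr => v _.
  case: ifPn => [_ | nvA]; case: ifPn => // /(subsetP cA); by rewrite (negbTE nvA).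
apply/exists_inP/contraT; rewrite negb_exists_in => /forall_inP small.
have : \sum_(c <- cs) delta * #|A|%:R < \sum_(v in A) delta * (size cs)%:R.
  apply: (@le_lt_trans _ _ (\sum_(c <- cs) #|c|%:R)).
    by rewrite big_seq [leRHS]big_seq; apply: ler_sum => c /dense [].
  rewrite -natr_sum -double_count natr_sum; apply: ltr_sum.
    by apply/hasP; exists v0; rewrite ?mem_index_enum.
  by move=> v /small; rewrite ltNge.
rewrite sumr_const big_const_seq count_predT iter_addr_0.
by rewrite -(mulr_natr (delta * _) (size cs)) -(mulr_natr (delta * _) #|A|) mulrAC ltxx.
Qed.

Lemma ord_ltn_trans N : transitive (relpre val ltn : rel 'I_N).
Proof. exact: relpre_trans ltn_trans. Qed.

Lemma ord_ltn_irr N : irreflexive (relpre val ltn : rel 'I_N).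
Proof. exact: ltnn. Qed.

Lemma sorted_enum_ord_ltn N : sorted (relpre val ltn) (enum 'I_N).
Proof. by rewrite -sorted_map val_enum_ord iota_ltn_sorted. Qed.

Section Witnesses.

Variables (R : realDomainType) (delta : R) (V : finType) (N : nat).
Variables (part : V -> 'I_N * 'I_N) (C : 'I_N -> 'I_N -> 'I_N -> {set V}).
Hypothesis part_nonempty : forall i j : 'I_N, (i < j)%N -> exists v, part v = (i, j).
Hypothesis C_dense : forall i j k : 'I_N, (i < j)%N -> (j < k)%N ->
  C i j k \subset Vpart part i k /\ delta * #|Vpart part i k|%:R <= #|C i j k|%:R.

Definition witnessed (i k : 'I_N) (J : seq 'I_N) :=
  [exists v in Vpart part i k, all (fun j => v \in C i j k) J].

Lemma exists_witnessed_subseq (i k : 'I_N) (mid : seq 'I_N) (m : nat) :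
  (i < k)%N -> {in mid, forall j : 'I_N, (i < j)%N && (j < k)%N} ->
  m%:R <= delta * (size mid)%:R ->
  exists2 J, subseq J mid & size J = m /\ witnessed i k J.
Proof.
move=> lt_ik mid_between le_m.
have nonempty : Vpart part i k != set0.
  by have [v part_v] := part_nonempty lt_ik; apply/set0Pn; exists v; rewrite inE part_v.
have [|v vV le_count] := @density_pigeonhole R delta V _ [seq C i j k | j <- mid] nonempty.
  by move=> c /mapP [j /mid_between /andP [lt_ij lt_jk] ->]; exact: C_dense.
rewrite size_map count_map in le_count.
have le_m_count : (m <= count (fun j => v \in C i j k) mid)%N.
  by rewrite -(ler_nat R); exact: le_trans le_count.
exists (take m [seq j <- mid | v \in C i j k]).
  exact: subseq_trans (take_subseq _ _) (filter_subseq _ _).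
split; first by rewrite size_takel // size_filter.
apply/exists_inP; exists v => //; apply/allP => j /mem_take.
by rewrite mem_filter => /andP [].
Qed.

Variable x0 : 'I_N.

Definition pair_witnessed (S : seq 'I_N) (p q : nat) :=
  (p < q)%N ==> witnessed (nth x0 S p) (nth x0 S q) (inner_segment p q S).

Lemma exists_pair_witnessed (n L p q : nat) (Y : seq 'I_N) :
  n%:R <= delta * L%:R -> sorted (relpre val ltn) Y -> (q < n)%N ->
  size Y = (n + L)%N ->
  exists2 S, subseq S Y & size S = n /\ pair_witnessed S p q.
Proof.
move=> le_nL sortedY lt_qn szY; case: (ltnP p q) => [lt_pq | le_qp]; last first.
  exists (take n Y); rewrite ?take_subseq // size_takel ?szY ?leq_addr //.
  by rewrite /pair_witnessed ltnNge le_qp.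
have [|S sSY [szS wS]] := sorted_subseq_segment (@ord_ltn_trans N) x0 (P := witnessed)
    sortedY (introT andP (conj lt_pq lt_qn)) szY.
  move=> i k mid lt_ik mid_between szmid; apply: exists_witnessed_subseq => //.
  by rewrite szmid; apply: le_trans le_nL; rewrite ler_nat; lia.
by exists S; rewrite // /pair_witnessed lt_pq.
Qed.

Lemma exists_index_set_witnesses (v0 : V) (Y : seq 'I_N) :
  sorted (relpre val ltn) Y -> (forall p q : 'I_(size Y), pair_witnessed Y p q) ->
  exists (I : {set 'I_N}) (gamma : 'I_N -> 'I_N -> V),
    #|I| = size Y /\
    forall i k, i \in I -> k \in I -> (i < k)%N ->
      gamma i k \in Vpart part i k /\
      forall j, j \in I -> (i < j)%N -> (j < k)%N -> gamma i k \in C i j k.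
Proof.
move=> sortedY witnessedY.
pose segment i k := inner_segment (index i Y) (index k Y) Y.
exists [set x in Y], (fun i k =>
  odflt v0 [pick v in Vpart part i k | all (fun j => v \in C i j k) (segment i k)]).
split=> [|i k]; first by rewrite cardsE (card_uniqP (sorted_uniq
  (@ord_ltn_trans N) (@ord_ltn_irr N) sortedY)).
move=> iY kY lt_ik; rewrite !inE in iY kY.
have [i_idx k_idx] : (index i Y < size Y)%N /\ (index k Y < size Y)%N.
  by rewrite !index_mem.
have lt_idx := sorted_index_lt (@ord_ltn_trans N) (@ord_ltn_irr N) sortedY iY kY lt_ik.
have := witnessedY (Ordinal i_idx) (Ordinal k_idx).
rewrite /pair_witnessed /= lt_idx !nth_index // => /exists_inP [v vV v_all].
case: pickP => [w /andP [wV w_all] | none]; last by have := none v; rewrite vV v_all.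
split=> // j jY lt_ij lt_jk; rewrite inE in jY; apply: (allP w_all).
exact: (mem_inner_segment (@ord_ltn_trans N) (@ord_ltn_irr N) sortedY iY jY kY lt_ij lt_jk).
Qed.

End Witnesses.

Theorem lemma4p3 (R : realType) (delta : R) (n : nat) :
  0 < delta ->
  exists N : nat,
    forall (V : finType) (part : V -> 'I_N * 'I_N) (E : {set {set V}}),
      is_partitioned_hypergraph part E ->
      forall C : 'I_N -> 'I_N -> 'I_N -> {set V},
        (forall i j k : 'I_N, (i < j)%N -> (j < k)%N ->
           C i j k \subset Vpart part i k /\
           delta * (#|Vpart part i k|)%:R <= (#|C i j k|)%:R) ->
        exists (I : {set 'I_N}) (gamma : 'I_N -> 'I_N -> V),
          #|I| = n /\
          (forall i k : 'I_N, i \in I -> k \in I -> (i < k)%N ->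
             gamma i k \in Vpart part i k /\
             (forall j : 'I_N, j \in I -> (i < j)%N -> (j < k)%N ->
                gamma i k \in C i j k)).
Proof.
move=> delta_gt0.
have [L le_nL] := exists_nat_mul_ge n%:R delta_gt0.
have [M forcing] := ramsey_forcing (enum {: 'I_n * 'I_n}) n n (n + L).
exists M.+2 => V part E [_ [part_nonempty _]] C C_dense.
have [v0 _] := part_nonempty ord0 ord_max isT.
have sorted_sub Y : subseq Y (enum 'I_M.+2) -> sorted (relpre val ltn) Y.
  by move/subseq_sorted; apply; [exact: ord_ltn_trans | exact: sorted_enum_ord_ltn].
have [pq Y _ /sorted_sub sortedY szY | | Y sYX [szY monoY]] := forcing 'I_M.+2
    (enum 'I_M.+2) (fun (pq : 'I_n * 'I_n) S => pair_witnessed part C ord0 S pq.1 pq.2).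
- by apply: (exists_pair_witnessed part_nonempty C_dense ord0 pq.1 le_nL sortedY
    (ltn_ord pq.2) szY).
- by rewrite size_enum_ord; lia.
rewrite -szY; apply: (exists_index_set_witnesses (x0 := ord0) v0 (sorted_sub Y sYX)) => p q.
exact: monoY (cast_ord szY p, cast_ord szY q) (mem_enum _ _) Y (subseq_refl Y) szY.
Qed.
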